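(* There is an absolute constant $c>0$ such that for every $m\ge 3$ and every $n$ that is a multiple of $m-1$ with $n\ge 2(m-1)$, there is a preference profile with $n$ agents and $m$ alternatives on which Plurality Veto (with any processing order of the agents) has utilitarian distortion at least $c\,n/m$. In particular, the utilitarian distortion of Plurality Veto is $\Omega(n/m)$.
   Context: Setting: $\mathcal N$ is a set of $n$ agents and $\mathcal A$ a set of $m$ alternatives. Each agent $i$ has a strict ranking $\sigma_i$ of $\mathcal A$; $r_i(X)$ is the position of $X$ in $\sigma_i$ (1 = top) and $X\succ_i Y$ means $r_i(X)<r_i(Y)$. The plurality score $\mathrm{plu}(X,\vec\sigma)$ is the number of agents ranking $X$ first. A (randomized) voting rule maps each profile $\vec\sigma=(\sigma_1,\dots,\sigma_n)$ to a probability distribution over $\mathcal A$; it is deterministic if it always outputs a point mass. Utilitarian framework: each agent has $u_i:\mathcal A\to\mathbb R_{\ge 0}$ with $\sum_{X}u_i(X)=1$; the utility profile $\vec u$ is consistent with $\vec\sigma$ if $X\succ_i Y\Rightarrow u_i(X)\ge u_i(Y)$. $\mathrm{SW}(X,\vec u)=\sum_i u_i(X)$. The utilitarian distortion of a distribution $p$ on $\vec u$ is $\max_X \mathrm{SW}(X,\vec u)/\mathbb E_{X\sim p}[\mathrm{SW}(X,\vec u)]$; the utilitarian distortion of a rule $f$ on $\vec\sigma$ is the supremum of this over all $\vec u$ consistent with $\vec\sigma$, and the utilitarian distortion of $f$ is the maximum over all profiles. Plurality Veto: initialize $\mathrm{score}(X)=\mathrm{plu}(X,\vec\sigma)$ for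 every $X$, and let $S$ be the set of alternatives with positive score. Process the agents one by one in some fixed order; when agent $i$ is processed, let $Y$ be the alternative in $S$ that $i$ ranks lowest, decrease $\mathrm{score}(Y)$ by one, and remove $Y$ from $S$ if its score becomes $0$. Output the alternative removed from $S$ last (at the final step). *)

From HB Require Import structures.
From mathcomp Require Import all_boot all_order all_algebra all_fingroup.
From mathcomp Require Import all_classical all_reals ereal.
Set Implicit Arguments. Unset Strict Implicit. Unset Printing Implicit Defensive.
Import Order.TTheory GRing.Theory Num.Theory.

(* A profile assigns to each agent i
   a ranking sigma i : {perm 'I_m}, where (sigma i X : nat) is the position of
   X in agent i's ranking, 0-indexed (0 = top, i.e. r_i(X) = sigma i X + 1). *)
Definition profile (n m : nat) := 'I_n -> {perm 'I_m}.

Section Voting.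
Variables (n m : nat) (sig : profile n m).

Definition prefers (i : 'I_n) (X Y : 'I_m) : bool := (sig i X < sig i Y)%N.

Definition plu (X : 'I_m) : nat := #|[set i | (sig i X : nat) == 0%N]|.

Definition veto (i : 'I_n) (sc : 'I_m -> nat) : option 'I_m :=
  [pick Y | (0 < sc Y)%N && [forall X, (0 < sc X)%N ==> (sig i X <= sig i Y)%N]].

(* one step of Plurality Veto: state = (scores, last vetoed alternative);
   S is the set of alternatives of positive score. *)
Definition pv_step (st : ('I_m -> nat) * option 'I_m) (i : 'I_n)
  : ('I_m -> nat) * option 'I_m :=
  match veto i st.1 with
  | Some Y => (fun X => if X == Y then (st.1 X).-1 else st.1 X, Some Y)
  | None => (st.1, None)
  end.

(* Plurality Veto with processing order ord: agents ord 0, ord 1, ..., ord (n-1)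
   are processed in turn; the output is the alternative treated at the final
   step (which is the one removed from S last). *)
Definition pv_winner (ord : {perm 'I_n}) : option 'I_m :=
  (foldl pv_step (plu, None) [seq ord k | k <- enum 'I_n]).2.

Variable R : realType.

Definition utility_profile (u : 'I_n -> 'I_m -> R) : Prop :=
  (forall i X, 0 <= u i X)%R /\ (forall i, \sum_(X < m) u i X = 1)%R.

Definition consistent (u : 'I_n -> 'I_m -> R) : Prop :=
  forall i X Y, prefers i X Y -> (u i Y <= u i X)%R.

Definition SW (u : 'I_n -> 'I_m -> R) (X : 'I_m) : R := (\sum_(i < n) u i X)%R.

(* max_X SW(X,u) / SW(W,u), with the convention  x / 0 = +oo *)
Definition dist_ratio (u : 'I_n -> 'I_m -> R) (W : 'I_m) : \bar R :=
  let best := (\big[Num.max/0%R]_(X < m) SW u X)%R in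
  if SW u W == 0%R then +oo%E else ((best / SW u W)%R)%:E.

Definition distortion (W : 'I_m) : \bar R :=
  ereal_sup [set r | exists u, utility_profile u /\ consistent u /\ r = dist_ratio u W].

End Voting.

From HB Require Import structures.
From mathcomp Require Import all_boot all_order all_algebra all_fingroup.
From mathcomp Require Import all_classical all_reals ereal.
From mathcomp Require Import zify ring lra.
Import Order.TTheory GRing.Theory Num.Theory.

(* Fix m >= 3 alternatives, among them a, b, c, and n >= 4 agents; write
   n = x + y + 4 with y <= x <= y + 1.  In the hard profile two agents rank
   a > b > c, two rank a > c > b, x rank b > a > c and y rank c > a > b,
   every agent putting the remaining m - 3 alternatives last.

   1. Whatever the processing order, Plurality Veto elects a: the run is
      abstracted to scores of a, b, c and numbers of remaining agents of each
      type, and an arithmetic invariant [a_last_inv] shows that a is the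
      last alternative removed (Lemma [hard_profile_winner]).
   2. Give the four a-first agents the uniform utility and let the others
      put all their utility on their favourite.  Then SW(a) = 4/m while
      SW(b) = 4/m + x, so the distortion of a is at least 1 + x m / 4,
      which is at least n / (8 m) (Lemma [hard_profile_distortion]). *)

Lemma count_processing_order (T : finType) (ord : {perm T}) (P : pred T) :
  count P [seq ord k | k <- enum T] = count P (enum T).
Proof.
apply/seq.permP/uniq_perm; rewrite ?(map_inj_uniq (@perm_inj _ ord)) ?enum_uniq //.
by move=> i; rewrite mem_enum; apply/mapP; exists ((ord^-1)%g i); rewrite ?mem_enum ?permKV.
Qed.

Lemma card_count (T : finType) (P : pred T) : #|P| = count P (enum T).
Proof. by rewrite -sum1_count -sum1_card big_enum_cond. Qed.

Section PluralityVetoFacts.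
Variables (n m : nat) (sig : profile n m).

Lemma veto_lowest i (sc : 'I_m -> nat) Y : (0 < sc Y)%N ->
  (forall X, (0 < sc X)%N -> (sig i X <= sig i Y)%N) -> veto sig i sc = Some Y.
Proof.
move=> scY Ylow; rewrite /veto; case: pickP => [Z /andP[scZ /forallP Zlow] | none].
  congr Some; apply: (@perm_inj _ (sig i)); apply: val_inj; apply/eqP.
  by rewrite eqn_leq Ylow //; move: (Zlow Y); rewrite scY.
by move: (none Y); rewrite scY /=; move/negbT/negP; case; apply/forallP => X; apply/implyP/Ylow.
Qed.

End PluralityVetoFacts.

Section DistortionFacts.
Variables (n m : nat) (sig : profile n m) (R : realType).
Local Open Scope ring_scope.

Lemma distortion_ge_ratio (u : 'I_n -> 'I_m -> R) (W Y : 'I_m) :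
  utility_profile u -> consistent sig u ->
  ((SW u Y / SW u W)%:E <= distortion sig R W)%E.
Proof.
move=> u_prof u_cons; apply: (@le_trans _ _ (dist_ratio u W)).
  rewrite /dist_ratio; case: eqP => [_|SW_W]; first exact: leey.
  have SW_W_ge0 : 0 <= SW u W by apply: sumr_ge0 => i _; case: u_prof.
  by rewrite lee_fin ler_wpM2r ?invr_ge0 //; exact: (le_bigmax _ (SW u)).
by apply: ereal_sup_ubound; exists u.
Qed.

End DistortionFacts.

(* Voter types over the three alternatives a = 0, b = 1, c = 2:
   type 0 ranks a > b > c, type 1 ranks a > c > b,
   type 2 ranks b > a > c, type 3 ranks c > a > b.
   [rank3 t j] is the (0-based) position of alternative j for type t. *)
Definition rank3 (t j : nat) : nat :=
  match t, j with
  | 0, j => j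
  | 1, 0 => 0 | 1, 1 => 2 | 1, _ => 1
  | 2, 0 => 1 | 2, 1 => 0 | 2, _ => 2
  | _, 0 => 1 | _, 1 => 2 | _, _ => 0
  end.

(* The alternative vetoed by a type-t agent when the alive alternatives
   (those of positive score) among a, b, c are given by pa, pb, pc. *)
Definition veto3 (t : nat) (pa pb pc : bool) : nat :=
  match t with
  | 0 => if pc then 2 else if pb then 1 else 0
  | 1 => if pb then 1 else if pc then 2 else 0
  | 2 => if pc then 2 else if pa then 0 else 1
  | _ => if pb then 1 else if pa then 0 else 2
  end.

Lemma veto3_lowest t (pa pb pc : bool) : pa || pb || pc ->
  let alive j := nth false [:: pa; pb; pc] j in
  let v := veto3 t pa pb pc in
  [/\ v < 3, alive v & forall j, j < 3 -> alive j -> rank3 t j <= rank3 t v].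
Proof.
by case: t => [|[|[|t]]]; case: pa; case: pb; case: pc => //= _;
  split=> // [[|[|[|j]]]].
Qed.

(* Invariant of a Plurality Veto run on the three alternatives a, b, c with
   scores sa, sb, sc, while r_t agents of type t remain to be processed;
   [last_a] records whether the previous veto hit a.  The total score equals
   the number of remaining agents; while both b and c are alive, the agents
   who veto c before a (types 0 and 2) cannot exhaust c and a together, and
   symmetrically for b; once one of b, c is gone, the remaining agents who
   then veto a are too few to eliminate it; once both are gone, a was just
   vetoed or is still alive.  Hence a is the last alternative removed. *)
Definition a_last_inv (sa sb sc r0 r1 r2 r3 : nat) (last_a : bool) : Prop :=
  sa + sb + sc = r0 + r1 + r2 + r3 /\
  ( (0 < sb /\ 0 < sc /\ r2 + r0 < sc + sa /\ r3 + r1 < sb + sa)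
  \/ (sc = 0 /\ 0 < sb /\ r2 < sa)
  \/ (sb = 0 /\ 0 < sc /\ r3 < sa)
  \/ (sb = 0 /\ sc = 0 /\ 0 < sa + last_a)).

Lemma a_last_inv_step sa sb sc r0 r1 r2 r3 last_a t : t < 4 ->
  a_last_inv sa sb sc (r0 + (t == 0)) (r1 + (t == 1)) (r2 + (t == 2))
    (r3 + (t == 3)) last_a ->
  let v := veto3 t (0 < sa) (0 < sb) (0 < sc) in
  a_last_inv (if v == 0 then sa.-1 else sa) (if v == 1 then sb.-1 else sb)
    (if v == 2 then sc.-1 else sc) r0 r1 r2 r3 (v == 0).
Proof.
case: t => [|[|[|[|t]]]] // _;
case: sa => [|sa]; case: sb => [|sb]; case: sc => [|sc]; rewrite /a_last_inv /=; lia.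
Qed.

Lemma a_last_inv_done sa sb sc last_a :
  a_last_inv sa sb sc 0 0 0 0 last_a -> last_a.
Proof. by rewrite /a_last_inv; case: last_a => //; lia. Qed.

Section WelfareArithmetic.
Variable R : realType.
Local Open Scope ring_scope.

Lemma welfare_ratio_bound (k x n : nat) : (0 < k)%N -> (n <= 2 * x + 4)%N ->
  1 / 8 * n%:R / k%:R <= (4 / k%:R + x%:R) / (4 / k%:R) :> R.
Proof.
move=> k_gt0 n_le; have kR_gt0 : 0 < k%:R :> R by rewrite ltr0n.
have nR_le : n%:R <= 2 * x%:R + 4 :> R.
  by move: n_le; rewrite -(ler_nat R) natrD natrM.
have kR_ge1 : 1 <= k%:R :> R by rewrite ler1n.
have -> : (4 / k%:R + x%:R) / (4 / k%:R) = 1 + x%:R * k%:R / 4 :> R.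
  by field; rewrite gt_eqF.
rewrite ler_pdivrMr //.
have x_le : x%:R <= x%:R * (k%:R * k%:R) :> R.
  by rewrite ler_peMr // -natrM ler1n muln_gt0 k_gt0.
nra.
Qed.

End WelfareArithmetic.

Section HardProfile.
Variables (m' n x y : nat).
Hypothesis n_split : x + y + 4 = n.
Local Notation M := m'.+3.

Definition types : seq nat := nseq 2 0 ++ nseq 2 1 ++ nseq x 2 ++ nseq y 3.
Definition typ (i : 'I_n) : nat := nth 3 types i.

Lemma size_types : size types = n.
Proof. by rewrite /types !size_cat !size_nseq; lia. Qed.

Lemma typ_lt4 i : typ i < 4.
Proof.
rewrite /typ; case: (ltnP i (size types)) => [lt_i | ?]; last by rewrite nth_default.
have /(all_nthP 3) all_lt4 : all (fun t => t < 4) types.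
  by rewrite /types !all_cat !all_nseq !orbT.
exact: all_lt4.
Qed.

Lemma big_agents (T : Type) (idx : T) (op : Monoid.com_law idx) (F : nat -> T) :
  \big[op/idx]_(i < n) F (typ i) = \big[op/idx]_(t <- types) F t.
Proof. by rewrite (big_nth 3) size_types big_mkord. Qed.

Definition alt (j : nat) : 'I_M := inord j.

Lemma alt_val j : j < 3 -> val (alt j) = j.
Proof. by move=> lt_j; rewrite /alt /= inordK //; lia. Qed.

Lemma alt_eq j k : j < 3 -> k < 3 -> (alt j == alt k) = (j == k).
Proof. by move=> lt_j lt_k; rewrite -val_eqE /= !alt_val. Qed.

Definition type_perm (t : nat) : {perm 'I_M} :=
  match t with
  | 0 => 1
  | 1 => tperm (alt 1) (alt 2)
  | 2 => tperm (alt 0) (alt 1)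
  | _ => tperm (alt 0) (alt 1) * tperm (alt 0) (alt 2)
  end.

Definition hard_profile : profile n M := fun i => type_perm (typ i).

Lemma type_perm_abc t j : j < 3 -> val (type_perm t (alt j)) = rank3 t j.
Proof.
case: j => [|[|[|j]]] // _; case: t => [|[|[|t]]];
  rewrite /type_perm ?perm1 ?permM ?[tperm _ _ _]permE /= ?alt_eq //=;
  by rewrite ?[tperm _ _ _]permE /= ?alt_eq //= ?alt_val.
Qed.

Lemma type_perm_other t X : 2 < val X -> type_perm t X = X.
Proof.
move=> lt2X; have X_neq j : j < 3 -> (X == alt j) = false.
  move=> lt_j; apply/negbTE; rewrite -val_eqE /= alt_val //.
  by apply/eqP => X_j; move: lt2X; rewrite /= X_j; lia.
by case: t => [|[|[|t]]]; rewrite /type_perm ?perm1 ?permM ?[tperm _ _ _]permE /= ?X_neq.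
Qed.

Definition abc_supported (sc : 'I_M -> nat) : Prop := forall X : 'I_M, 2 < val X -> sc X = 0.

Lemma pv_step_abc st i : abc_supported st.1 ->
  let alive j := 0 < st.1 (alt j) in
  alive 0 || alive 1 || alive 2 ->
  let v := alt (veto3 (typ i) (alive 0) (alive 1) (alive 2)) in
  pv_step hard_profile st i = (fun X => if X == v then (st.1 X).-1 else st.1 X, Some v).
Proof.
move=> supp alive some_alive v.
have [lt_v alive_v lowest] := @veto3_lowest (typ i) _ _ _ some_alive.
have aliveE j : j < 3 -> nth false [:: alive 0; alive 1; alive 2] j = alive j.
  by case: j => [|[|[|j]]].
rewrite /pv_step (@veto_lowest _ _ _ _ _ v) //; first by move: alive_v; rewrite aliveE.
move=> X alive_X; have lt_X : val X < 3.
  by case: (ltnP (val X) 3) => // le3X; move: alive_X; rewrite supp.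
have X_alt : X = alt (val X) by apply: val_inj; rewrite alt_val.
rewrite X_alt !type_perm_abc // lowest ?aliveE //.
by rewrite /alive -X_alt.
Qed.

Definition count_type (t : nat) (s : seq 'I_n) : nat := count (preim typ (pred1 t)) s.

Lemma pv_run_ends_with_a (s : seq 'I_n) st : abc_supported st.1 ->
  a_last_inv (st.1 (alt 0)) (st.1 (alt 1)) (st.1 (alt 2))
    (count_type 0 s) (count_type 1 s) (count_type 2 s) (count_type 3 s)
    (st.2 == Some (alt 0)) ->
  (foldl (pv_step hard_profile) st s).2 = Some (alt 0).
Proof.
elim: s st => [|i s IH] st supp inv /=; first by apply/eqP; exact: a_last_inv_done inv.
have some_alive : (0 < st.1 (alt 0)) || (0 < st.1 (alt 1)) || (0 < st.1 (alt 2)).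
  move: inv (typ_lt4 i) => [+ _]; rewrite /count_type /= !lt0n.
  by case: (typ i) => [|[|[|[|?]]]] //=; case: eqP; case: eqP; case: eqP; lia.
rewrite pv_step_abc //; set v := veto3 _ _ _ _.
have lt_v : v < 3 by case: (@veto3_lowest (typ i) _ _ _ some_alive).
apply: IH => /= [X lt2X | ].
  by rewrite supp //; case: eqP => // X_v; move: lt2X; rewrite X_v alt_val.
move: inv; rewrite /count_type /= ![(_ == _) + count _ _]addnC.
move=> /(@a_last_inv_step _ _ _ _ _ _ _ _ _ (typ_lt4 i)); rewrite -/v !alt_eq //.
by rewrite (inj_eq (@Some_inj _)) alt_eq // ![_ == v]eq_sym.
Qed.

Lemma count_agents (P : pred nat) :
  count (preim typ P) (enum 'I_n) = count P types.
Proof.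
by rewrite -[in RHS](mkseq_nth 3 types) size_types /mkseq count_map -val_enum_ord count_map.
Qed.

Lemma plu_abc j : j < 3 ->
  plu hard_profile (alt j) = count (fun t => rank3 t j == 0) types.
Proof.
move=> lt_j; rewrite /plu cardsE card_count -count_agents.
by apply: eq_count => i; rewrite /= type_perm_abc.
Qed.

Lemma plu_abc_supported : abc_supported (plu hard_profile).
Proof.
move=> X lt2X; rewrite /plu cardsE card_count (eq_count (a2 := pred0)) ?count_pred0 //.
by move=> i; rewrite /= /hard_profile type_perm_other //; apply/eqP => X0; move: lt2X; rewrite /= X0.
Qed.

Hypothesis balanced : y <= x <= y.+1.

Lemma hard_profile_winner (ord : {perm 'I_n}) :
  pv_winner hard_profile ord = Some (alt 0).
Proof.
apply: pv_run_ends_with_a; first exact: plu_abc_supported.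
rewrite /= !plu_abc // /count_type !count_processing_order !count_agents.
by rewrite /types /a_last_inv !count_cat !count_nseq /=; lia.
Qed.

Variable R : realType.
Local Open Scope ring_scope.

Definition type_utility (t : nat) (X : 'I_M) : R :=
  if (t < 2)%N then M%:R^-1 else if t == 2 then (X == alt 1)%:R else (X == alt 2)%:R.

Definition bad_utility (i : 'I_n) (X : 'I_M) : R := type_utility (typ i) X.

Lemma sum_indicator (Y : 'I_M) : \sum_(X < M) ((X == Y)%:R : R) = 1.
Proof. by rewrite (bigD1 Y) //= eqxx big1 ?addr0 // => X /negbTE ->. Qed.

Lemma bad_utility_profile : utility_profile bad_utility.
Proof.
rewrite /bad_utility /type_utility; split=> [i X | i].
  by case: ifP => _; [rewrite invr_ge0 ler0n | case: ifP => _; exact: ler0n].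
case: (typ i < 2)%N; last by case: (typ i == 2); exact: sum_indicator.
by rewrite sumr_const card_ord -[_ *+ _]mulr_natr mulVf // pnatr_eq0.
Qed.

Lemma bad_utility_consistent : consistent hard_profile bad_utility.
Proof.
move=> i X Y; rewrite /prefers /bad_utility /type_utility; case: ifP => // ge2.
have top_fav j : (j < 3)%N -> rank3 (typ i) j = 0%N ->
    (hard_profile i X < hard_profile i Y)%N -> (Y == alt j)%:R <= ((X == alt j)%:R : R).
  move=> lt_j top lt_XY; have [Yj | _] := eqVneq Y (alt j); last exact: ler0n.
  by move: lt_XY; rewrite Yj /hard_profile type_perm_abc // top.
case: ifP => [/eqP t2 | t_neq2]; first by apply: top_fav; rewrite ?t2.
apply: top_fav => //; move: ge2 t_neq2 (typ_lt4 i).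
by case: (typ i) => [|[|[|[|?]]]].
Qed.

Lemma SW_bad (X : 'I_M) : SW bad_utility X =
  type_utility 0 X *+ 2 + type_utility 1 X *+ 2 + type_utility 2 X *+ x + type_utility 3 X *+ y.
Proof.
rewrite /SW /bad_utility (@big_agents _ _ _ (fun t => type_utility t X)) /types.
by rewrite !big_cat !big_nseq !iter_addr_0 /= !addrA.
Qed.

Lemma SW_a : SW bad_utility (alt 0) = 4 / M%:R.
Proof. by rewrite SW_bad /type_utility /= !alt_eq //= !mul0rn !addr0 -mulrnDr mulrC mulr_natr. Qed.

Lemma SW_b : SW bad_utility (alt 1) = 4 / M%:R + x%:R.
Proof. by rewrite SW_bad /type_utility /= !alt_eq //= mul0rn addr0 -mulrnDr mulrC mulr_natr. Qed.

Lemma hard_profile_distortion :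
  ((1 / 8 * n%:R / M%:R)%:E <= distortion hard_profile R (alt 0))%E.
Proof.
apply: le_trans (@distortion_ge_ratio _ _ _ _ _ (alt 0) (alt 1)
  bad_utility_profile bad_utility_consistent).
by rewrite lee_fin SW_a SW_b welfare_ratio_bound //; lia.
Qed.

End HardProfile.

Theorem mainTheorem1 (R : realType) :
  exists c : R, (0 < c)%R /\
  forall m n : nat, (3 <= m)%N -> (m - 1 %| n)%N -> (2 * (m - 1) <= n)%N ->
  exists sig : profile n m,
  forall ord : {perm 'I_n},
  exists W : 'I_m, pv_winner sig ord = Some W /\
    (((c * n%:R / m%:R)%R)%:E <= distortion sig R W)%E.
Proof.
exists (1 / 8)%R; split; first by rewrite divr_gt0 ?ltr0n.
move=> [|[|[|m']]] // n _ _ n_ge; set y := ((n - 4) %/ 2)%N; set x := (n - 4 - y)%N.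
have n_split : (x + y + 4)%N = n by rewrite /x /y; lia.
have balanced : (y <= x <= y.+1)%N by rewrite /x /y; lia.
exists (hard_profile m' n x y) => ord; exists (alt m' 0); split.
  exact: hard_profile_winner.
exact: hard_profile_distortion.
Qed.
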